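(* Let $\Sigma$ be a set of labels, $h\in\mathbb{N}_0$, and let $\mathcal{G}$ be a set of finite simple undirected graphs each equipped with a vertex labelling $\mathrm{lab}:V(G)\to\Sigma$. Let $\mathcal{V}$ be the disjoint union of the vertex sets of the graphs in $\mathcal{G}$, let $\mathrm{lab}_0,\dots,\mathrm{lab}_h$ be the Weisfeiler-Lehman colourings, and define the base kernel $k(u,v)=\sum_{i=0}^h[\mathrm{lab}_i(u)=\mathrm{lab}_i(v)]$ on $\mathcal{V}$ (where $[\cdot]$ is $1$ if the condition holds and $0$ otherwise). Then: (i) for all $u,v\in\mathcal{V}$ and $i<h$, $\mathrm{lab}_i(u)\ne\mathrm{lab}_i(v)$ implies $\mathrm{lab}_{i+1}(u)\ne\mathrm{lab}_{i+1}(v)$; (ii) $k$ is a strong kernel on $\mathcal{V}$; (iii) the Weisfeiler-Lehman optimal assignment kernel $K(G,H)=\mathrm{OA}_k(V(G),V(H))$ satisfies $$K(G,H)=\sum_{i=0}^h\sum_{c}\min\{|\{v\in V(G):\mathrm{lab}_i(v)=c\}|,\,|\{v\in V(H):\mathrm{lab}_i(v)=c\}|\},$$ the inner sum ranging over all colours $c$; and (iv) $K$ is a valid kernel on $\mathcal{G}$.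
   Context: Weisfeiler-Lehman colourings: $\mathrm{lab}_0=\mathrm{lab}$, and for $i\ge1$, for every vertex $v$ of a graph $G\in\mathcal{G}$ form the sequence consisting of $\mathrm{lab}_{i-1}(v)$ followed by the lexicographically sorted multiset $\{\mathrm{lab}_{i-1}(u): uv\in E(G)\}$ of colours of its neighbours; then $\mathrm{lab}_i(v)$ is the image of this sequence under a fixed injective map from sequences to new colours, the same map being used for all graphs in $\mathcal{G}$. A strong kernel on a set $\mathcal{X}$ is a symmetric function $k:\mathcal{X}\times\mathcal{X}\to\mathbb{R}_{\ge 0}$ such that $k(x,y)\ge\min\{k(x,z),k(z,y)\}$ for all $x,y,z\in\mathcal{X}$. A valid kernel on a set $\mathcal{S}$ is a symmetric function $K:\mathcal{S}\times\mathcal{S}\to\mathbb{R}$ such that for every finite collection $s_1,\dots,s_m\in\mathcal{S}$ the matrix $(K(s_i,s_j))_{i,j}$ is positive semidefinite. For finite sets $A,B$ and a nonnegative function $k$ on pairs of their elements, $\mathrm{OA}_k(A,B)=\max_{\sigma}\sum_{a\in A}k(a,\sigma(a))$ over all injections $\sigma:A\to B$ if $|A|\le|B|$, and $\mathrm{OA}_k(A,B)=\mathrm{OA}_k(B,A)$ if $|A|>|B|$ (equivalently: pad the smaller set with new elements $z$ having $k(z,\cdot)=0$ and maximize over bijections). *)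

From HB Require Import structures.
From mathcomp Require Import all_boot all_order all_algebra.
Set Implicit Arguments. Unset Strict Implicit. Unset Printing Implicit Defensive.
Import Order.TTheory GRing.Theory Num.Theory.

(* Weisfeiler-Lehman colourings of one labelled graph (V, e, lab), colours in a
   totally ordered type C; f : seq C -> C is the fixed injective map from
   sequences to colours.  wl f e lab i = lab_i. *)
Fixpoint wl d (C : orderType d) (f : seq C -> C) (V : finType) (e : rel V)
    (lab : V -> C) (n : nat) : V -> C :=
  match n with
  | 0 => lab
  | n'.+1 => fun v =>
      f (wl f e lab n' v ::
         sort (@Order.le d C) [seq wl f e lab n' u | u <- enum V & e v u])
  end.

Definition OA (A B : finType) (k : A -> B -> nat) : nat :=
  if #|A| <= #|B| then
    \max_(s : {ffun A -> B} | injectiveb s) \sum_(a : A) k a (s a)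
  else
    \max_(s : {ffun B -> A} | injectiveb s) \sum_(b : B) k (s b) b.

(* Strong kernel (values in nat, which are nonnegative reals). *)
Definition strong_kernel (X : Type) (k : X -> X -> nat) : Prop :=
  (forall x y, k x y = k y x) /\
  (forall x y z, minn (k x z) (k z y) <= k x y).

Definition valid_kernel (R : realFieldType) (S : Type) (K : S -> S -> R) : Prop :=
  (forall x y, K x y = K y x) /\
  (forall (m : nat) (s : 'I_m -> S) (x : 'I_m -> R),
      (0 <= \sum_(i < m) \sum_(j < m) x i * x j * K (s i) (s j))%R).

(* Since f is injective, two vertices that agree at level t + 1 agree at
   level t; so the levels at which u and v agree form an initial segment and
   k u v is its length, which gives the strong-kernel inequality.
   An injection contributes at level t at most the histogram intersection
   \sum_c minn n_G(c) n_H(c) of the level-t colour counts.  Conversely, a pair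
   (u, v) maximising k among the unmatched vertices can be matched without
   loss: if u and v differ at level t, then no other unmatched vertex of H has
   the level-t colour of u, and none of G that of v, since such a vertex would
   give a pair with larger k.  Finally minn m n = \sum_(r < N) [r < m] [r < n],
   so the histogram intersection is a Gram matrix of 0/1 feature vectors,
   hence positive semidefinite. *)

From HB Require Import structures.
From mathcomp Require Import all_boot all_order all_algebra.
From mathcomp Require Import zify.
Set Implicit Arguments. Unset Strict Implicit. Unset Printing Implicit Defensive.
Import Order.TTheory GRing.Theory Num.Theory.

Section MeetSize.
Variable T : eqType.
Implicit Types (L s : seq T) (a b c : T).

Definition meet_size (s1 s2 : seq T) : nat :=
  \sum_(c <- undup (s1 ++ s2)) minn (count_mem c s1) (count_mem c s2).

Lemma meet_size_over L s1 s2 : uniq L -> {subset s1 ++ s2 <= L} ->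
  meet_size s1 s2 = \sum_(c <- L) minn (count_mem c s1) (count_mem c s2).
Proof.
move=> uL sL; rewrite (bigID (mem (s1 ++ s2))) /= [X in _ + X]big1 ?addn0; last first.
  by move=> c; rewrite mem_cat negb_or => /andP[/count_memPn -> _]; rewrite min0n.
rewrite -big_filter; apply: perm_big; apply: uniq_perm; rewrite ?filter_uniq ?undup_uniq //.
by move=> c; rewrite mem_filter mem_undup andb_idr //; apply: sL.
Qed.

Lemma meet_sizeC s1 s2 : meet_size s1 s2 = meet_size s2 s1.
Proof.
rewrite (@meet_size_over (undup (s2 ++ s1))) ?undup_uniq //.
  by apply: eq_bigr => c _; rewrite minnC.
by move=> c; rewrite mem_undup !mem_cat orbC.
Qed.

Lemma meet_size0s s2 : meet_size [::] s2 = 0.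
Proof. by rewrite /meet_size big1 // => c _; rewrite min0n. Qed.

Lemma meet_size_perm s1 s1' s2 s2' : perm_eq s1 s1' -> perm_eq s2 s2' ->
  meet_size s1 s2 = meet_size s1' s2'.
Proof.
move=> p1 p2; rewrite (@meet_size_over (undup (s1' ++ s2'))) ?undup_uniq //.
  by apply: eq_bigr => c _; rewrite (permP p1) (permP p2).
by move=> c; rewrite mem_undup !mem_cat (perm_mem p1) (perm_mem p2).
Qed.

Lemma leq_meet_size s1 s2 s1' s2' :
  (forall c, count_mem c s1 <= count_mem c s1') ->
  (forall c, count_mem c s2 <= count_mem c s2') ->
  meet_size s1 s2 <= meet_size s1' s2'.
Proof.
move=> le1 le2.
have sub s s' : (forall c, count_mem c s <= count_mem c s') -> {subset s <= s'}.
  by move=> le c; rewrite -!has_pred1 !has_count => /leq_trans; apply.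
rewrite (@meet_size_over (undup (s1' ++ s2')) s1) ?undup_uniq //; last first.
  by move=> c; rewrite mem_undup !mem_cat => /orP[/(sub _ _ le1)-> | /(sub _ _ le2)->]; rewrite ?orbT.
by apply: leq_sum => c _; rewrite leq_min geq_min le1 geq_min le2 orbT.
Qed.

Lemma meet_size_cons2 c s1 s2 : meet_size (c :: s1) (c :: s2) = (meet_size s1 s2).+1.
Proof.
rewrite [in RHS](@meet_size_over (undup (c :: s1 ++ c :: s2))) ?undup_uniq //; last first.
  by move=> x; rewrite mem_undup /= !(in_cons, mem_cat) => /orP[] ->; rewrite ?orbT.
have c1 : count_mem c (undup (c :: s1 ++ c :: s2)) = 1.
  by rewrite count_uniq_mem ?undup_uniq // mem_undup mem_head.
rewrite /meet_size -add1n -c1 -sum1_count [X in X + _]big_mkcond -big_split /=.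
by apply: eq_bigr => x _; rewrite -addn_minr eq_sym; case: (x == c).
Qed.

Lemma leq_meet_size_cons a b s1 s2 :
  (a == b) + meet_size s1 s2 <= meet_size (a :: s1) (b :: s2).
Proof.
have [<- | _] := eqVneq a b; first by rewrite meet_size_cons2.
by apply: leq_meet_size => c; rewrite /= leq_addl.
Qed.

Lemma meet_size_cons_notin a b s1 s2 : a \notin b :: s2 -> b \notin a :: s1 ->
  meet_size (a :: s1) (b :: s2) = meet_size s1 s2.
Proof.
move=> aN bN; rewrite [in RHS](@meet_size_over (undup (a :: s1 ++ b :: s2))) ?undup_uniq //; last first.
  by move=> x; rewrite mem_undup /= !(in_cons, mem_cat) => /orP[] ->; rewrite ?orbT.
apply: eq_bigr => c _.
have [<- | ac] := eqVneq a c.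
  rewrite (count_memPn aN) (count_memPn (contra (@mem_behead _ _ a) aN)).
  by rewrite !minn0.
have [<- | bc] := eqVneq b c.
  rewrite (count_memPn bN) (count_memPn (contra (@mem_behead _ _ b) bN)).
  by rewrite !min0n.
by rewrite /= (negbTE ac) (negbTE bc).
Qed.

Lemma minn_sum_indicators m n N : m <= N -> n <= N ->
  minn m n = \sum_(r < N) (r < m) * (r < n).
Proof.
have sum_ltn k : \sum_(r < N) (r < k) = minn k N.
  elim: N => [|N IHN]; first by rewrite big_ord0 minn0.
  by rewrite big_ord_recr /= IHN; case: ltnP => /=; lia.
move=> mN nN; under eq_bigr do rewrite mulnb -leq_min.
by rewrite sum_ltn; lia.
Qed.

Lemma meet_size_indicators L N s1 s2 : uniq L -> {subset s1 ++ s2 <= L} ->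
  size s1 <= N -> size s2 <= N ->
  meet_size s1 s2 = \sum_(c <- L) \sum_(r < N) (r < count_mem c s1) * (r < count_mem c s2).
Proof.
move=> uL sL s1N s2N; rewrite (meet_size_over uL sL); apply: eq_bigr => c _.
by apply: minn_sum_indicators; apply: leq_trans (count_size _ _) _.
Qed.

End MeetSize.

Section LevelKernel.
Variables (C : eqType) (h : nat) (X Y : Type) (la : nat -> X -> C) (lb : nat -> Y -> C).

Definition level_kernel (x : X) (y : Y) : nat := \sum_(t < h.+1) (la t x == lb t y).

Lemma level_kernel_le x y : level_kernel x y <= h.+1.
Proof.
rewrite -[h.+1]card_ord -sum1_card.
by apply: leq_sum => t _; case: (_ == _).
Qed.

Hypothesis refines : forall t x y, la t.+1 x == lb t.+1 y -> la t x == lb t y.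

Lemma refines_le s t x y : s <= t -> la t x == lb t y -> la s x == lb s y.
Proof.
elim: t => [|t IHt]; first by rewrite leqn0 => /eqP ->.
by rewrite leq_eqVlt => /predU1P[-> // | /IHt le_st /refines].
Qed.

Lemma level_kernel_gtE t x y : t <= h -> (t < level_kernel x y) = (la t x == lb t y).
Proof.
move=> le_th; rewrite /level_kernel -(big_mkord xpredT (fun s => (la s x == lb s y) : nat)).
rewrite (@big_cat_nat _ _ _ t) //= ?leqW // [X in _ + X]big_ltn ?ltnS //=.
have [agree | disagree] := boolP (la t x == lb t y).
  rewrite (eq_big_nat _ _ (F2 := fun=> 1)) ?sum_nat_const_nat ?muln1 ?subn0; last first.
    by move=> s /andP[_ lt_st]; rewrite (refines_le (ltnW lt_st) agree).
  by rewrite add1n addnS ltnS leq_addr.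
have -> : \sum_(t.+1 <= s < h.+1) (la s x == lb s y) = 0.
  rewrite big_nat_cond big1 // => s /andP[/andP[lt_ts _] _]; apply/eqP; rewrite eqb0.
  by apply: contra disagree; apply: refines_le (ltnW lt_ts).
apply/negbTE; rewrite -leqNgt !addn0.
apply: (@leq_trans (\sum_(0 <= s < t) 1)); first by apply: leq_sum => s _; apply: leq_b1.
by rewrite sum_nat_const_nat muln1 subn0.
Qed.

End LevelKernel.

Lemma level_kernelC (C : eqType) (h : nat) (X Y : Type) (la : nat -> X -> C)
    (lb : nat -> Y -> C) x y :
  level_kernel h la lb x y = level_kernel h lb la y x.
Proof. by rewrite /level_kernel; apply: eq_bigr => t _; rewrite eq_sym. Qed.

Lemma level_kernel_strong (C : eqType) (h : nat) (X : Type) (la : nat -> X -> C) :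
  (forall t x y, la t.+1 x == la t.+1 y -> la t x == la t y) ->
  strong_kernel (level_kernel h la la).
Proof.
move=> refines; split=> [x y | x y z]; first by rewrite level_kernelC.
case E: (minn _ _) => [//|t].
have /andP[lt_xz lt_zy] : (t < level_kernel h la la x z) && (t < level_kernel h la la z y).
  by rewrite -leq_min E.
have le_th : t <= h by rewrite -ltnS (leq_trans lt_xz (level_kernel_le _ _ _ _ _)).
rewrite !level_kernel_gtE // in lt_xz lt_zy *.
by rewrite (eqP lt_xz).
Qed.

Section HistogramKernel.
Variables (C : eqType) (h : nat) (X Y : eqType) (la : nat -> X -> C) (lb : nat -> Y -> C).
Implicit Types (sx : seq X) (sy : seq Y).

Definition hist_kernel sx sy : nat :=
  \sum_(t < h.+1) meet_size (map (la t) sx) (map (lb t) sy).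

Local Notation k := (level_kernel h la lb).

Lemma hist_kernel0s sy : hist_kernel [::] sy = 0.
Proof. by rewrite /hist_kernel big1 // => t _; apply: meet_size0s. Qed.

Lemma hist_kernel_perm sx sx' sy sy' : perm_eq sx sx' -> perm_eq sy sy' ->
  hist_kernel sx sy = hist_kernel sx' sy'.
Proof. by move=> px py; apply: eq_bigr => t _; apply: meet_size_perm; apply: perm_map. Qed.

Lemma leq_hist_kernelr sx sy sy' : (forall y, count_mem y sy <= count_mem y sy') ->
  hist_kernel sx sy <= hist_kernel sx sy'.
Proof.
move=> /count_subseqP[s sub_s perm_s]; apply: leq_sum => t _.
apply: leq_meet_size => // c; rewrite !count_map (permP perm_s).
exact: leq_count_subseq.
Qed.

Lemma leq_hist_kernel_cons a b sx sy :
  k a b + hist_kernel sx sy <= hist_kernel (a :: sx) (b :: sy).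
Proof. by rewrite -big_split; apply: leq_sum => t _; apply: leq_meet_size_cons. Qed.

Lemma leq_sum_level_kernel_hist (g : X -> Y) sx :
  \sum_(x <- sx) k x (g x) <= hist_kernel sx (map g sx).
Proof.
elim: sx => [|x sx IHsx]; first by rewrite big_nil hist_kernel0s.
by rewrite big_cons (leq_trans _ (leq_hist_kernel_cons _ _ _ _)) ?leq_add2l.
Qed.

Hypothesis refines : forall t x y, la t.+1 x == lb t.+1 y -> la t x == lb t y.

Lemma hist_kernel_cons_max a b sx sy :
  (forall x, x \in sx -> k x b <= k a b) -> (forall y, y \in sy -> k a y <= k a b) ->
  hist_kernel (a :: sx) (b :: sy) = k a b + hist_kernel sx sy.
Proof.
move=> max_x max_y; rewrite -big_split; apply: eq_bigr => t _ /=.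
have le_th : t <= h := ltn_ord t.
have [agree | disagree] := eqVneq (la t a) (lb t b).
  by rewrite agree meet_size_cons2.
have below_t x y : k x y <= k a b -> la t x != lb t y.
  move=> le_k; rewrite -!(level_kernel_gtE (h:=h) refines) // in disagree *.
  by apply: contra disagree => /leq_trans; apply.
have a_new : la t a \notin map (lb t) sy.
  by apply/mapP => -[y /max_y/below_t/negP nay /eqP].
have b_new : lb t b \notin map (la t) sx.
  by apply/mapP => -[x /max_x/below_t/negP nxb /esym/eqP].
by rewrite meet_size_cons_notin // !inE negb_or ?a_new ?b_new ?andbT // eq_sym.
Qed.

End HistogramKernel.

Lemma hist_kernelC (C : eqType) (h : nat) (X Y : eqType) (la : nat -> X -> C)
    (lb : nat -> Y -> C) sx sy :
  hist_kernel h la lb sx sy = hist_kernel h lb la sy sx.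
Proof. by apply: eq_bigr => t _; apply: meet_sizeC. Qed.

Lemma perm_enum_setD1 (T : finType) (A : {set T}) a :
  a \in A -> perm_eq (enum A) (a :: enum (A :\ a)).
Proof.
move=> aA; apply: uniq_perm; rewrite /= ?enum_uniq ?mem_enum ?setD11 //.
by move=> x; rewrite in_cons !mem_enum in_setD1; case: eqP => // ->.
Qed.

Lemma inj_in_update (A B : finType) (S : {set A}) (s : A -> B) a b :
  {in S :\ a &, injective s} -> {in S :\ a, forall x, s x != b} ->
  {in S &, injective (fun x => if x == a then b else s x)}.
Proof.
move=> inj_s s_ne_b x y xS yS /=.
case: eqP => [-> | /eqP xa]; case: eqP => [-> // | /eqP ya].
- by move/esym/eqP; rewrite (negbTE (s_ne_b y _)) // in_setD1 ya.
- by move/eqP; rewrite (negbTE (s_ne_b x _)) // in_setD1 xa.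
- by apply: inj_s; rewrite in_setD1 ?xa ?ya.
Qed.

Section Assignment.
Variables (C : eqType) (h : nat) (A B : finType) (la : nat -> A -> C) (lb : nat -> B -> C).
Local Notation k := (level_kernel h la lb).
Local Notation hist := (hist_kernel h la lb).

Lemma leq_sum_level_kernel_inj (s : A -> B) : injective s ->
  \sum_a k a (s a) <= hist (enum A) (enum B).
Proof.
move=> inj_s; rewrite -big_enum (leq_trans (leq_sum_level_kernel_hist h la lb s (enum A))) //.
apply: leq_hist_kernelr => y; rewrite !count_uniq_mem ?enum_uniq ?mem_enum //.
  exact: leq_b1.
by rewrite (map_inj_uniq inj_s) enum_uniq.
Qed.

Hypothesis refines : forall t x y, la t.+1 x == lb t.+1 y -> la t x == lb t y.

Lemma hist_kernel_setD1_max (SA : {set A}) (SB : {set B}) a b :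
  a \in SA -> b \in SB -> (forall x y, x \in SA -> y \in SB -> k x y <= k a b) ->
  hist (enum SA) (enum SB) = k a b + hist (enum (SA :\ a)) (enum (SB :\ b)).
Proof.
move=> aSA bSB kmax.
rewrite (hist_kernel_perm h la lb (perm_enum_setD1 aSA) (perm_enum_setD1 bSB)).
by apply: hist_kernel_cons_max => // [x | y]; rewrite mem_enum => /setD1P[_];
  [move/kmax; apply | apply: kmax].
Qed.

(* s0 only provides the values outside SA. *)
Lemma greedy_assignment (s0 : {ffun A -> B}) n (SA : {set A}) (SB : {set B}) :
  #|SA| = n -> n <= #|SB| ->
  exists s : {ffun A -> B}, [/\ {in SA &, injective s}, {in SA, forall x, s x \in SB}
    & hist (enum SA) (enum SB) <= \sum_(x in SA) k x (s x)].
Proof.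
elim: n SA SB => [|n IHn] SA SB cardSA leSB.
  exists s0; rewrite (cards0_eq cardSA) enum_set0 hist_kernel0s.
  by split=> // x; rewrite inE.
have [a0 a0SA] : exists a0, a0 \in SA by apply/card_gt0P; rewrite cardSA.
have [b0 b0SB] : exists b0, b0 \in SB by apply/card_gt0P; rewrite (leq_trans _ leSB).
pose P := [pred p : A * B | (p.1 \in SA) && (p.2 \in SB)].
case: (@arg_maxnP _ (a0, b0) P (fun p => k p.1 p.2)); first exact/andP.
move=> [a b] /andP[/= aSA bSB] kmax.
have cardSA' : #|SA :\ a| = n.
  by apply/eqP; rewrite -eqSS -cardSA (cardsD1 a SA) aSA.
have leSB' : n <= #|SB :\ b|.
  by rewrite -ltnS (leq_trans leSB) // (cardsD1 b SB) bSB.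
have [s [inj_s sSB le_hist]] := IHn _ _ cardSA' leSB'.
have s_in_SBb z : z \in SA :\ a -> (s z != b) && (s z \in SB).
  by move=> zSA; rewrite -in_setD1; apply: sSB.
exists [ffun x => if x == a then b else s x]; split.
- move=> x y xSA ySA; rewrite !ffunE; apply: (inj_in_update inj_s) => // z zS.
  by have /andP[] := s_in_SBb z zS.
- move=> x xSA; rewrite ffunE; case: eqP => // /eqP xa.
  by have /andP[] := s_in_SBb x (introT setD1P (conj xa xSA)).
rewrite (hist_kernel_setD1_max aSA bSB); last first.
  by move=> x y xSA ySB; apply: (kmax (x, y)); apply/andP.
rewrite (bigD1 a aSA) /= ffunE eqxx leq_add2l; apply: (leq_trans le_hist).
apply: eq_leq; apply: eq_big => [x | x]; first by rewrite in_setD1 andbC.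
by rewrite in_setD1 ffunE => /andP[/negbTE ->].
Qed.

Lemma bigmax_inj_level_kernel : #|A| <= #|B| ->
  \max_(s : {ffun A -> B} | injectiveb s) \sum_a k a (s a) = hist (enum A) (enum B).
Proof.
move=> leAB; apply/eqP; rewrite eqn_leq; apply/andP; split.
  by apply/bigmax_leqP => s /injectiveP; apply: leq_sum_level_kernel_inj.
have /card_gt0P[s0 _] : 0 < #|[set s : {ffun A -> B} | injectiveb s]|.
  by rewrite card_inj_ffuns ffact_gt0.
have leAB' : #|[set: A]| <= #|[set: B]| by rewrite !cardsT.
have [s [inj_s _ le_hist]] := greedy_assignment s0 (erefl _) leAB'.
have inj_s' : injectiveb s by apply/injectiveP => x y; apply: inj_s; rewrite inE.
apply: leq_trans (leq_bigmax_cond _ inj_s'); rewrite !enum_setT -!enumT in le_hist.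
by apply: (leq_trans le_hist); apply: eq_leq; apply: eq_bigl => x; rewrite inE.
Qed.

End Assignment.

Lemma OA_level_kernel (C : eqType) (h : nat) (A B : finType)
    (la : nat -> A -> C) (lb : nat -> B -> C) :
  (forall t x y, la t.+1 x == lb t.+1 y -> la t x == lb t y) ->
  OA (level_kernel h la lb) = hist_kernel h la lb (enum A) (enum B).
Proof.
move=> refines; rewrite /OA; case: leqP => [leAB | /ltnW leBA].
  exact: bigmax_inj_level_kernel.
rewrite hist_kernelC -bigmax_inj_level_kernel //; last first.
  by move=> t x y; rewrite ![lb _ _ == _]eq_sym; apply: refines.
by apply: eq_bigr => s _; apply: eq_bigr => b _; rewrite level_kernelC.
Qed.

Section PositiveSemidefinite.
Variable R : realFieldType.
Local Open Scope ring_scope.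

Definition psd m (M : 'I_m -> 'I_m -> R) : Prop :=
  forall x : 'I_m -> R, 0 <= \sum_i \sum_j x i * x j * M i j.

Lemma eq_psd m (M N : 'I_m -> 'I_m -> R) : (forall i j, M i j = N i j) -> psd N -> psd M.
Proof.
by move=> eqMN psdN x; under eq_bigr do under eq_bigr do rewrite eqMN; apply: psdN.
Qed.

Lemma psd_sum m (I : Type) (r : seq I) (M : I -> 'I_m -> 'I_m -> R) :
  (forall k, psd (M k)) -> psd (fun i j => \sum_(k <- r) M k i j).
Proof.
move=> psdM x; under eq_bigr do under eq_bigr do rewrite mulr_sumr.
under eq_bigr do rewrite exchange_big /=; rewrite exchange_big /=.
by apply: sumr_ge0 => k _; apply: psdM.
Qed.

Lemma psd_outer m (phi : 'I_m -> R) : psd (fun i j => phi i * phi j).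
Proof.
move=> x; rewrite (_ : \sum_i _ = (\sum_i x i * phi i) ^+ 2) ?sqr_ge0 //.
rewrite expr2 mulr_suml; apply: eq_bigr => i _; rewrite mulr_sumr.
by apply: eq_bigr => j _; rewrite mulrACA.
Qed.

Lemma psd_meet_size (T : eqType) m (ss : 'I_m -> seq T) :
  psd (fun i j => (meet_size (ss i) (ss j))%:R).
Proof.
pose L := undup (flatten [seq ss i | i <- enum 'I_m]).
pose N := \max_i size (ss i).
have sub_L i j : {subset ss i ++ ss j <= L}.
  by move=> c; rewrite mem_undup mem_cat => /orP[] ?; apply/flatten_mapP;
    [exists i | exists j]; rewrite ?mem_enum.
apply: (eq_psd (N := fun i j => \sum_(c <- L) \sum_(r < N)
    (r < count_mem c (ss i))%:R * (r < count_mem c (ss j))%:R)) => [i j|].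
  rewrite (meet_size_indicators (N := N) (undup_uniq _) (sub_L i j)) ?leq_bigmax //.
  rewrite natr_sum; apply: eq_bigr => c _; rewrite natr_sum.
  by apply: eq_bigr => r _; rewrite natrM.
by apply: psd_sum => c; apply: psd_sum => r; apply: psd_outer.
Qed.

End PositiveSemidefinite.

Lemma card_fiber (T : finType) (U : eqType) (g : T -> U) c :
  #|[pred x | g x == c]| = count_mem c [seq g x | x : T].
Proof. by rewrite count_map -size_filter cardE /enum_mem filter_predT. Qed.

Lemma wl_refines d (C : orderType d) (f : seq C -> C) (V W : finType) (e : rel V) (e' : rel W)
    (lab : V -> C) (lab' : W -> C) t v w : injective f ->
  wl f e lab t.+1 v == wl f e' lab' t.+1 w -> wl f e lab t v == wl f e' lab' t w.
Proof. by move=> inj_f /eqP /= /inj_f[->]. Qed.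

Unset Implicit Arguments. Set Strict Implicit. Set Printing Implicit Defensive.

Theorem mainTheorem11 (d : Order.disp_t) (C : orderType d) (f : seq C -> C) (hf : injective f)
    (I : Type) (V : I -> finType) (e : forall i, rel (V i))
    (lab : forall i, V i -> C)
    (e_sym : forall i, symmetric (e i)) (e_irr : forall i, irreflexive (e i))
    (h : nat) (R : realFieldType) :
  let labi := fun (i : I) (t : nat) => wl f (e i) (lab i) t in
  let k := fun (x y : {i : I & V i}) =>
    \sum_(t < h.+1) (labi (projT1 x) t (projT2 x) == labi (projT1 y) t (projT2 y)) in
  let K := fun (G H : I) =>
    OA (fun (u : V G) (v : V H) => k (existT _ G u) (existT _ H v)) in
  [/\ (forall (x y : {i : I & V i}) (t : nat), t < h ->
         labi (projT1 x) t (projT2 x) != labi (projT1 y) t (projT2 y) ->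
         labi (projT1 x) t.+1 (projT2 x) != labi (projT1 y) t.+1 (projT2 y)),
      strong_kernel k,
      (forall G H : I,
         K G H = \sum_(t < h.+1)
                   \sum_(c <- undup ([seq labi G t v | v : V G] ++ [seq labi H t v | v : V H]))
                     minn #|[pred v : V G | labi G t v == c]|
                          #|[pred v : V H | labi H t v == c]|)
    & valid_kernel (fun G H : I => ((K G H)%:R)%R : R)].
Proof.
move=> labi k K.
have refines G H t (u : V G) (v : V H) :
    labi G t.+1 u == labi H t.+1 v -> labi G t u == labi H t v.
  exact: wl_refines.
have KE G H : K G H = hist_kernel h (labi G) (labi H) (enum (V G)) (enum (V H)).
  exact: OA_level_kernel (refines G H).
split.
- by move=> x y t _; apply: contra; apply: refines.
- exact: (level_kernel_strong h (fun t x y => refines _ _ t (projT2 x) (projT2 y))).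
- by move=> G H; rewrite KE; apply: eq_bigr => t _; apply: eq_bigr => c _; rewrite !card_fiber.
split=> [G H | m s]; first by rewrite !KE hist_kernelC.
apply: (eq_psd (N := fun i j => (\sum_(t < h.+1) (meet_size
    [seq labi (s i) t v | v : V (s i)] [seq labi (s j) t v | v : V (s j)])%:R)%R)).
  by move=> i j; rewrite KE natr_sum.
by apply: psd_sum => t; apply: psd_meet_size.
Qed.
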